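(* Assume $M$ has genus zero, let $a\in(0,1)$, $b=1-a$, and $p=\frac{q'}{q'+a^{-1}-1}$. Let $\omega\subseteq\mathsf E$ be distributed according to the $\mathrm{FK}(qq')$ random cluster model on $\mathsf G$ with parameter $p$ and free boundary conditions, i.e. $\propto (qq')^{k(\omega)}p^{|\omega|}(1-p)^{|\mathsf E\setminus\omega|}$. Independently assign to each cluster of $\omega$ a spin chosen uniformly from $Q$, and to each cluster of $\omega^\dagger$ (in $\mathsf G^*$) a spin chosen uniformly from $Q'$, all independently, and let $\sigma:\mathsf V\to Q$, $\sigma':\mathsf U\to Q'$ be the resulting spin configurations. Then $(\sigma,\sigma')$ has law $\mathbf P(\sigma,\sigma')\propto a^{|\eta(\sigma')|}b^{|\eta(\sigma)|}$ on $\Sigma$.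
   Context: $M$ is the sphere or the plane. Let $\mathsf G=(\mathsf V,\mathsf E)$ be a finite connected graph embedded in $M$ with all faces topological discs, and $\mathsf G^*=(\mathsf U,\mathsf E^* )$ its embedded dual ($\mathsf U$ = faces of $\mathsf G$); $e^*$ is the dual edge crossing $e$, $\xi^*=\{e^*:e\in\xi\}$, and for $\xi\subseteq\mathsf E$, $\xi^\dagger=\mathsf E^*\setminus\xi^*$. Fix integers $q,q'\ge1$ and finite $Q,Q'\subset\mathbb C$ with $Q=-Q$, $Q'=-Q'$, $|Q|=q$, $|Q'|=q'$. For $\sigma:\mathsf V\to Q$, $\eta(\sigma)\subseteq\mathsf E^*$ is the set of $e^*$ whose primal $e$ has endpoints with different $\sigma$-values; for $\sigma':\mathsf U\to Q'$, $\eta(\sigma')\subseteq\mathsf E$ is the set of $e$ whose dual $e^*$ has endpoints with different $\sigma'$-values. $\Sigma=\{(\sigma,\sigma'):\eta(\sigma)^*\cap\eta(\sigma')=\emptyset\}$. A cluster of $\omega$ is a connected component of $(\mathsf V,\omega)$ (isolated vertices included), $k(\omega)$ their number; clusters of $\omega^\dagger$ are connected components of $(\mathsf U,\omega^\dagger)$. *)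

(* Embedded graph of genus zero encoded as a combinatorial map. *)
From mathcomp Require Import all_boot all_order all_algebra all_fingroup.
From mathcomp Require Export reals.
Set Implicit Arguments. Unset Strict Implicit. Unset Printing Implicit Defensive.
Import GRing.Theory Num.Theory.
Local Open Scope ring_scope.

Section PlanarMap.
(* D : darts (half-edges), V : vertices, E : edges, U : faces.
   alpha : fixed-point free involution pairing the two darts of an edge,
   sigma : rotation of darts around their vertex,
   phimap := sigma o alpha : face permutation.
   vert d / edge d / face d : vertex / edge / face to which dart d belongs.
   The edge e = edge d has endpoints vert d, vert (alpha d); its dual edge e*
   joins face d and face (alpha d). *)
Variables (D V E U : finType) (alpha sigma : {perm D})
  (vert : D -> V) (edge : D -> E) (face : D -> U).

Definition phimap : {perm D} := (alpha * sigma)%g. (* d |-> sigma (alpha d) *)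

Definition genus0_map : Prop :=
  (forall d, alpha d != d) /\
  (forall d, alpha (alpha d) = d) /\
  (forall d d', (vert d == vert d') = fconnect sigma d d') /\
  (forall d d', (edge d == edge d') = fconnect alpha d d') /\
  (forall d d', (face d == face d') = fconnect phimap d d') /\
  (forall x : V, exists d, vert d = x) /\
  (forall e : E, exists d, edge d = e) /\
  (forall u : U, exists d, face d = u) /\
  (forall d d', connect [rel x y | (y == sigma x) || (y == alpha x)] d d') /\
  (#|V| + #|U| = #|E| + 2)%N.

Definition prim_rel (w : {set E}) : rel V :=
  fun x y => [exists d, [&& edge d \in w, vert d == x & vert (alpha d) == y]].
(* adjacency in (U, w^dagger): dual edges of the primal edges not in w *)
Definition dual_rel (w : {set E}) : rel U :=
  fun u v => [exists d, [&& edge d \notin w, face d == u & face (alpha d) == v]].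

(* number of connected components (= clusters, isolated points included) *)
Definition ncomp (T : finType) (r : rel T) : nat :=
  #|[set [set y | connect r x y] | x : T]|.

Definition kprim (w : {set E}) : nat := ncomp (prim_rel w).
Definition kdual (w : {set E}) : nat := ncomp (dual_rel w).

Variables (Q Q' : finType).

(* eta(sigma), identified via e* <-> e with a set of primal edges *)
Definition eta_prim (s : {ffun V -> Q}) : {set E} :=
  [set e | [exists d, (edge d == e) && (s (vert d) != s (vert (alpha d)))]].
(* eta(sigma') : primal edges whose dual edge has endpoints of different spin *)
Definition eta_dual (s' : {ffun U -> Q'}) : {set E} :=
  [set e | [exists d, (edge d == e) && (s' (face d) != s' (face (alpha d)))]].

Definition in_Sigma (s : {ffun V -> Q}) (s' : {ffun U -> Q'}) : bool :=
  [disjoint eta_prim s & eta_dual s'].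

Definition const_on_prim (w : {set E}) (s : {ffun V -> Q}) : bool :=
  [forall x, [forall y, connect (prim_rel w) x y ==> (s x == s y)]].
Definition const_on_dual (w : {set E}) (s' : {ffun U -> Q'}) : bool :=
  [forall u, [forall v, connect (dual_rel w) u v ==> (s' u == s' v)]].

Variable R : realType.

Definition fk_weight (qq : R) (p : R) (w : {set E}) : R :=
  qq ^+ kprim w * p ^+ #|w| * (1 - p) ^+ #|~: w|.

Definition fk_prob (qq p : R) (w : {set E}) : R :=
  fk_weight qq p w / \sum_(w' : {set E}) fk_weight qq p w'.

(* Law of (sigma, sigma') produced by: sample w ~ FK(qq'), then give each
   cluster of w an independent uniform spin in Q and each cluster of w^dagger
   an independent uniform spin in Q'. Given w, a configuration s has
   probability (1/|Q|)^{k(w)} if it is constant on clusters of w, else 0. *)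
Definition coupled_law (p : R) (s : {ffun V -> Q}) (s' : {ffun U -> Q'}) : R :=
  \sum_(w : {set E})
     fk_prob (#|Q| * #|Q'|)%:R p w
     * (if const_on_prim w s then (#|Q|%:R)^-1 ^+ kprim w else 0)
     * (if const_on_dual w s' then (#|Q'|%:R)^-1 ^+ kdual w else 0).

Definition spin_weight (a b : R) (s : {ffun V -> Q}) (s' : {ffun U -> Q'}) : R :=
  if in_Sigma s s' then a ^+ #|eta_dual s'| * b ^+ #|eta_prim s| else 0.

Definition spin_law (a b : R) (s : {ffun V -> Q}) (s' : {ffun U -> Q'}) : R :=
  spin_weight a b s s' /
  \sum_(t : {ffun V -> Q}) \sum_(t' : {ffun U -> Q'}) spin_weight a b t t'.

End PlanarMap.

From mathcomp Require Import all_boot all_order all_algebra all_fingroup reals.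
From mathcomp Require Import zify ring.
Import GRing.Theory Num.Theory.
Set Implicit Arguments. Unset Strict Implicit. Unset Printing Implicit Defensive.

(* Given w, the spins are uniform among the configurations that are constant
   on the clusters of w and of its dual, i.e. with eta(sigma) disjoint from w
   and eta(sigma') contained in w, each such pair getting the weight
   q^-k(w) q'^-k(w^dagger).  For a planar map, Euler's formula
   k(w^dagger) + |V| = k(w) + |w| + 1 turns the FK weight times these factors
   into a constant multiple of a^|w| b^|E \ w|, because p = q'a / (q'a + b)
   and 1 - p = b / (q'a + b).  Summing over the w between eta(sigma') and the
   complement of eta(sigma) and using a + b = 1 leaves a^|eta(sigma')|
   b^|eta(sigma)|, and 0 outside Sigma.

   Euler's formula for subgraphs follows by monotonicity.  When an edge is
   added to w, either its endpoints are already joined in w, so k(w) is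
   unchanged and k(w^dagger) grows by at most one; or they are not, and walking
   around the boundary of the cluster shows that the two faces of the edge stay
   joined, so k(w^dagger) is unchanged and k(w) drops by at most one.  Hence
   k(w^dagger) - k(w) - |w| is nonincreasing in w; it is at most 1 - |V| at the
   empty set and at least |U| - 1 - |E| at E, and these agree since
   |V| + |U| = |E| + 2. *)

Lemma homo_connect (T T' : finType) (e : rel T) (e' : rel T') (f : T -> T') :
  {homo f : x y / e x y >-> connect e' x y} ->
  {homo f : x y / connect e x y >-> connect e' x y}.
Proof.
move=> fe x _ /connectP [p e_p ->]; elim: p x e_p => [|y p IHp] x /=.
  by rewrite connect0.
by case/andP=> /fe exy /IHp; apply: connect_trans.
Qed.

Lemma connect_const (T : finType) (A : Type) (e : rel T) (f : T -> A) :
  {homo f : x y / e x y >-> x = y} -> {homo f : x y / connect e x y >-> x = y}.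
Proof.
move=> fe x _ /connectP [p e_p ->]; elim: p x e_p => //= y p IHp x.
by case/andP=> /fe -> /IHp.
Qed.

Section Components.
Variable T : finType.
Implicit Types (r : rel T) (x y : T).

Definition comp r x := [set y | connect r x y].

Lemma comp_connect r x y : connect_sym r -> connect r x y -> comp r x = comp r y.
Proof. by move=> r_sym xy; apply/setP=> z; rewrite !inE (same_connect r_sym xy). Qed.

Lemma eq_ncomp r r' : connect r =2 connect r' -> ncomp r = ncomp r'.
Proof.
move=> rr'; rewrite /ncomp (eq_imset (g := comp r')) // => x.
by apply/setP=> y; rewrite !inE rr'.
Qed.

Lemma ncomp_le1 r : (forall x y, connect r x y) -> ncomp r <= 1.
Proof.
move=> r_conn; rewrite -(cards1 [set: T]); apply/subset_leq_card/subsetP.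
move=> _ /imsetP [x _ ->]; rewrite inE; apply/eqP/setP=> y.
by rewrite !inE r_conn.
Qed.

Lemma ncomp_rel0 r : (forall x y, ~~ r x y) -> ncomp r = #|T|.
Proof.
move=> r0; rewrite /ncomp (eq_imset (g := set1)) ?card_imset //; first exact: set1_inj.
move=> x; apply/setP=> y; rewrite !inE.
apply/idP/eqP=> [/connectP [[|z p] //= /andP [xz _] _]|<-]; last exact: connect0.
by rewrite (negbTE (r0 _ _)) in xz.
Qed.

Lemma ncomp_roots r : connect_sym r -> ncomp r = #|roots r|.
Proof.
move=> r_sym; rewrite /ncomp -(card_in_imset (f := comp r)); last first.
  move=> x y /eqP rx /eqP ry cxy; rewrite -rx -ry; apply/(fingraph.rootP r_sym).
  have : y \in comp r x by rewrite cxy inE connect0.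
  by rewrite inE.
apply: eq_card => C; apply/imsetP/imsetP=> [[x _ ->]|[x _ ->]].
  exists (fingraph.root r x); first exact/eqP/(root_root r_sym).
  exact: (comp_connect r_sym (connect_root r x)).
by exists x.
Qed.

Section AddEdge.
Variables (r r' : rel T) (x y : T).
Hypothesis r_sym : symmetric r.
Hypothesis r'_sub : forall u v, r' u v ->
  [|| r u v, (u == x) && (v == y) | (u == y) && (v == x)].

Let near z := connect r z x || connect r z y.

Lemma connect_add_edge u v : connect r' u v -> connect r u v \/ near u /\ near v.
Proof.
have r_csym := sym_connect_sym r_sym.
move=> /connectP [p r'_p ->]; elim/last_ind: p r'_p => [|p z IHp]; first by left.
rewrite rcons_path last_rcons => /andP [/IHp IH /r'_sub].
set t := last u p in IH *; have nx : near x by rewrite /near connect0.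
have ny : near y by rewrite /near connect0 orbT.
case/or3P=> [tz|/andP [/eqP tx /eqP ->]|/andP [/eqP ty /eqP ->]].
- case: IH => [ut|[nu nt]]; first by left; exact: connect_trans ut (connect1 tz).
  right; split=> //; have zt : connect r z t by rewrite r_csym connect1.
  move: nt; rewrite /near => /orP [tx|ty].
    by rewrite (connect_trans zt tx).
  by rewrite (connect_trans zt ty) orbT.
- by right; split=> //; case: IH => [ut|[]//]; rewrite /near -tx ut.
- by right; split=> //; case: IH => [ut|[]//]; rewrite /near -ty ut orbT.
Qed.

Lemma ncomp_add_edge_le : ncomp r <= (ncomp r').+1.
Proof.
have r_csym := sym_connect_sym r_sym.
pose K := [set comp r z | z : T].
pose lift (C : {set T}) := comp r' (odflt x [pick z in C]).
have liftK C : C \in K -> exists2 z, C = comp r z & lift C = comp r' z.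
  case/imsetP=> z _ ->; rewrite /lift; case: pickP => [t|/(_ z)]; last by rewrite inE connect0.
  by rewrite inE => zt; exists t; rewrite ?(comp_connect r_csym zt).
rewrite [ncomp r](cardsD1 (comp r y)) /= -/K.
apply: (leq_add (n1 := 1)); first by case: (_ \in K).
rewrite -(card_in_imset (f := lift)); last first.
  move=> C1 C2 /setD1P [C1y /liftK [z1 eC1 ->]] /setD1P [C2y /liftK [z2 eC2 ->]] E12.
  rewrite {}eC1 {}eC2 in C1y C2y *.
  have : z2 \in comp r' z1 by rewrite E12 inE connect0.
  rewrite inE => /connect_add_edge [/(comp_connect r_csym) //|[]].
  have nearx z : comp r z != comp r y -> near z -> connect r z x.
    by move=> zy /orP [//|/(comp_connect r_csym) zy']; rewrite zy' eqxx in zy.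
  move=> /(nearx _ C1y) z1x /(nearx _ C2y) z2x.
  by rewrite (comp_connect r_csym z1x) (comp_connect r_csym z2x).
apply/subset_leq_card/subsetP=> _ /imsetP [C /setD1P [_ /liftK [z _ ->]] ->].
exact: imset_f.
Qed.

Hypothesis r_sub : subrel r r'.

Lemma ncomp_add_edge_connected : connect r x y -> ncomp r = ncomp r'.
Proof.
move=> xy; apply: eq_ncomp => u v; apply/idP/idP.
  by apply: connect_sub => u' v' /r_sub /connect1.
apply: connect_sub => u' v' /r'_sub /or3P [/connect1 //|/andP [/eqP-> /eqP->] //|].
by case/andP=> /eqP-> /eqP->; rewrite (sym_connect_sym r_sym).
Qed.
End AddEdge.
End Components.

Section ConstOnComponents.
Variables (T Q : finType) (r : rel T).
Hypothesis r_sym : connect_sym r.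

Definition const_on_comp (s : {ffun T -> Q}) :=
  [forall x, [forall y, connect r x y ==> (s x == s y)]].

Lemma card_const_on_comp : #|[set s | const_on_comp s]| = (#|Q| ^ ncomp r)%N.
Proof.
pose S := {x | x \in roots r}.
pose rootS x : S := exist _ (fingraph.root r x) (introT eqP (root_root r_sym x)).
have rootSK (z : S) : rootS (val z) = z by apply: val_inj; exact/eqP/(valP z).
pose F (g : {ffun S -> Q}) := [ffun x => g (rootS x)].
have -> : [set s | const_on_comp s] = F @: setT.
  apply/setP=> s; rewrite inE; apply/idP/imsetP=> [s_const|[g _ ->]].
    exists [ffun z : S => s (val z)] => //; apply/ffunP=> x; rewrite !ffunE /=.
    apply/eqP; move/forallP/(_ x)/forallP/(_ (fingraph.root r x)): s_const.
    by rewrite connect_root eq_sym.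
  apply/forallP=> x; apply/forallP=> y; apply/implyP=> xy; rewrite !ffunE.
  by apply/eqP; congr (g _); apply: val_inj; apply/(fingraph.rootP r_sym).
rewrite card_in_imset; last first.
  by move=> g1 g2 _ _ /ffunP Fg; apply/ffunP=> z; have := Fg (val z); rewrite !ffunE rootSK.
by rewrite cardsT card_ffun card_sig ncomp_roots.
Qed.
End ConstOnComponents.

Section PlanarMap.
Variables (D V E U : finType) (alpha sigma : {perm D})
  (vert : D -> V) (edge : D -> E) (face : D -> U).
Hypothesis hmap : genus0_map alpha sigma vert edge face.
Implicit Types (w : {set E}) (d : D).

Lemma alphaK : involutive alpha.
Proof. by case: hmap => _ []. Qed.

Lemma vert_sigma d : vert (sigma d) = vert d.
Proof. by case: hmap => _ [_ [eq_vert _]]; apply/eqP; rewrite eq_sym eq_vert fconnect1. Qed.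

Lemma edge_alpha d : edge (alpha d) = edge d.
Proof. by case: hmap => _ [_ [_ [eq_edge _]]]; apply/eqP; rewrite eq_sym eq_edge fconnect1. Qed.

Lemma face_phimap d : face (sigma (alpha d)) = face d.
Proof.
case: hmap => _ [_ [_ [_ [eq_face _]]]]; apply/eqP; rewrite eq_sym eq_face.
by rewrite -permM -[(alpha * sigma)%g]/(phimap alpha sigma) fconnect1.
Qed.

Lemma face_sigma d : face (sigma d) = face (alpha d).
Proof. by rewrite -{1}(alphaK d) face_phimap. Qed.

Lemma edge_darts d d' : edge d' = edge d -> d' = d \/ d' = alpha d.
Proof.
case: hmap => _ [_ [_ [eq_edge _]]] /eqP; rewrite eq_sym eq_edge.
move/iter_findex <-; elim: (findex _ _ _) => [|n IHn]; first by left.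
by rewrite iterS; case: IHn => ->; [right | left; rewrite alphaK].
Qed.

Definition dart_rel (T : finType) (f : D -> T) (keep : pred E) : rel T :=
  fun x y => [exists d, [&& keep (edge d), f d == x & f (alpha d) == y]].

Lemma dart_rel_sym (T : finType) (f : D -> T) keep : symmetric (dart_rel f keep).
Proof.
move=> x y; apply/idP/idP => /existsP [d /and3P [dk dx dy]];
  by apply/existsP; exists (alpha d); rewrite edge_alpha alphaK dk dx dy.
Qed.

Lemma prim_connect_sym w : connect_sym (prim_rel alpha vert edge w).
Proof. exact/sym_connect_sym/(dart_rel_sym vert (fun e => e \in w)). Qed.

Lemma dual_connect_sym w : connect_sym (dual_rel alpha edge face w).
Proof. exact/sym_connect_sym/(dart_rel_sym face (fun e => e \notin w)). Qed.

Lemma dart_rel_sub (T : finType) (f : D -> T) (keep keep' : pred E) :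
  subpred keep keep' -> subrel (dart_rel f keep) (dart_rel f keep').
Proof.
move=> kk' x y /existsP [d /and3P [/kk' dk dx dy]].
by apply/existsP; exists d; rewrite dk dx dy.
Qed.

Lemma dart_rel_drop (T : finType) (f : D -> T) (keep keep' : pred E) d :
  (forall e, keep e -> e != edge d -> keep' e) -> forall x y, dart_rel f keep x y ->
  [|| dart_rel f keep' x y, (x == f d) && (y == f (alpha d)) | (x == f (alpha d)) && (y == f d)].
Proof.
move=> kk' x y /existsP [d' /and3P [d'k /eqP <- /eqP <-]].
have [/edge_darts [->|->]|d'd] := eqVneq (edge d') (edge d).
- by rewrite !eqxx ?orbT.
- by rewrite alphaK !eqxx ?orbT.
by apply/orP; left; apply/existsP; exists d'; rewrite kk' ?eqxx.
Qed.

Lemma const_on_dart_relE (T Q : finType) (f : D -> T) keep (s : {ffun T -> Q}) :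
  const_on_comp (dart_rel f keep) s =
  [disjoint keep & [pred e | [exists d, (edge d == e) && (s (f d) != s (f (alpha d)))]]].
Proof.
apply/idP/idP => [s_const|keep_eta].
  apply/pred0P => e /=; apply/negP => /andP [ke /existsP [d /andP [/eqP de]]]; subst e.
  apply/negP; rewrite negbK.
  move/forallP/(_ (f d))/forallP/(_ (f (alpha d)))/implyP: s_const; apply.
  by apply: connect1; apply/existsP; exists d; rewrite !eqxx !andbT; exact: ke.
apply/forallP=> x; apply/forallP=> y; apply/implyP=> /(connect_const (f := s)) -> //.
move=> _ _ /existsP [d /and3P [dk /eqP <- /eqP <-]]; apply/eqP.
move: (disjointFr keep_eta dk); rewrite inE => /negbT; rewrite negb_exists => /forallP /(_ d).
by rewrite eqxx negbK.
Qed.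

(* Convertible to [prim_rel w] and [dual_rel w]. *)
Local Notation prim w := (dart_rel vert (fun e => e \in w)).
Local Notation dual w := (dart_rel face (fun e => e \notin w)).
Local Notation kp w := (ncomp (prim w)).
Local Notation kd w := (ncomp (dual w)).

Section FaceTracing.
Variables (w : {set E}) (d : D).
Hypotheses (d_notin_w : edge d \notin w)
  (d_bridge : ~~ connect (prim w) (vert d) (vert (alpha d))).

Let in_cluster z := connect (prim w) (vert d) (vert z).
(* [tau] is the face permutation of the submap with edges [w]: its orbit through
   [d] goes around the cluster of [vert d], and each step either stays in a face
   of the map or crosses an edge outside [w]. *)
Let tau z := sigma (if edge z \in w then alpha z else z).

Lemma tau_inj : injective tau.
Proof.
move=> z1 z2 /perm_inj; case: ifP => z1w; case: ifP => z2w //.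
- exact: perm_inj.
- by move=> z12; rewrite -z12 edge_alpha z1w in z2w.
- by move=> z12; rewrite z12 edge_alpha z2w in z1w.
Qed.

Lemma in_cluster_tau z : in_cluster z -> in_cluster (tau z).
Proof.
rewrite /in_cluster /tau vert_sigma; case: ifP => // zw dz.
by apply: connect_trans dz (connect1 _); apply/existsP; exists z; rewrite zw !eqxx.
Qed.

Lemma connect_face_tau z : in_cluster z -> z != d ->
  connect (dual (edge d |: w)) (face z) (face (tau z)).
Proof.
rewrite /tau; case: ifP => zw dz zd; first by rewrite face_phimap connect0.
rewrite face_sigma; apply: connect1; apply/existsP; exists z.
rewrite !eqxx !andbT in_setU1 zw orbF; apply/eqP => /edge_darts [zd'|za].
  by rewrite zd' eqxx in zd.
by rewrite /in_cluster za (negbTE d_bridge) in dz.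
Qed.

Lemma connect_dual_bridge : connect (dual (edge d |: w)) (face d) (face (alpha d)).
Proof.
have tau_d : exists n, iter n tau (tau d) == d.
  exists (findex tau (tau d) d); rewrite iter_findex //.
  by rewrite fconnect_sym; [exact: fconnect1 | exact: tau_inj].
have [n /eqP tau_n n_min] := ex_minnP tau_d.
have walk i : i <= n -> in_cluster (iter i tau (tau d)) /\
    connect (dual (edge d |: w)) (face (tau d)) (face (iter i tau (tau d))).
  elim: i => [|i IHi] i_le.
    by split; [apply: in_cluster_tau; exact: connect0 | exact: connect0].
  have [IHc IHf] := IHi (ltnW i_le); rewrite iterS; split; first exact: in_cluster_tau.
  apply: connect_trans IHf (connect_face_tau IHc _).
  by apply/negP => /n_min; rewrite leqNgt i_le.
have [_] := walk n (leqnn n); rewrite tau_n /tau (negbTE d_notin_w) face_sigma.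
by rewrite (sym_connect_sym (dart_rel_sym _ _)).
Qed.
End FaceTracing.

Lemma kdual_setU1_le w e : e \notin w -> (kd (e |: w) + kp w <= kd w + kp (e |: w) + 1)%N.
Proof.
have [d <-] : exists d, edge d = e by case: hmap => _ [_ [_ [_ [_ [_ [edge_onto _]]]]]].
move=> d_notin_w.
have in_w e' : e' \in edge d |: w -> e' != edge d -> e' \in w.
  by rewrite in_setU1 => /orP [/eqP ->|//]; rewrite eqxx.
have notin_dw e' : e' \notin w -> e' != edge d -> e' \notin edge d |: w.
  by move=> ew ed; rewrite in_setU1 negb_or ed.
have prim_drop := dart_rel_drop (f := vert) in_w.
have dual_drop := dart_rel_drop (f := face) notin_dw.
have prim_sub : subrel (prim w) (prim (edge d |: w)).
  by apply: dart_rel_sub => e' e'w; rewrite in_setU1 e'w orbT.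
have dual_sub : subrel (dual (edge d |: w)) (dual w).
  by apply: dart_rel_sub => e'; rewrite in_setU1 negb_or => /andP [].
have kp_le := ncomp_add_edge_le (dart_rel_sym _ _) prim_drop.
have kd_le := ncomp_add_edge_le (dart_rel_sym _ _) dual_drop.
have [d_conn|d_bridge] := boolP (connect (prim w) (vert d) (vert (alpha d))).
  have := ncomp_add_edge_connected (dart_rel_sym _ _) prim_drop prim_sub d_conn; lia.
have := ncomp_add_edge_connected (dart_rel_sym _ _) dual_drop dual_sub
  (connect_dual_bridge d_notin_w d_bridge); lia.
Qed.

Lemma kdual_subset_le w w' : w \subset w' ->
  (kd w' + kp w + #|w| <= kd w + kp w' + #|w'|)%N.
Proof.
have [n] := ubnP #|w' :\: w|; elim: n w => // n IHn w diff_lt ww'.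
have [|[e e_in]] := set_0Vmem (w' :\: w).
  by move/eqP; rewrite setD_eq0 => w'w; have -> : w = w' by apply/eqP; rewrite eqEsubset ww'.
have [e_in_w' e_notin_w] := setDP e_in.
have diff_e : (#|w' :\: (e |: w)| < n)%N.
  by move: diff_lt; rewrite (cardsD1 e) e_in setDDl setUC; lia.
have := IHn _ diff_e; rewrite subUset sub1set e_in_w' ww' cardsU1 e_notin_w => /(_ isT).
have := kdual_setU1_le e_notin_w; lia.
Qed.

Lemma connect_of_darts (T : finType) (r : rel T) (f : D -> T) :
  (forall x, exists d, f d = x) ->
  (forall d, connect r (f d) (f (sigma d))) -> (forall d, connect r (f d) (f (alpha d))) ->
  forall x y, connect r x y.
Proof.
case: hmap => _ [_ [_ [_ [_ [_ [_ [_ [darts_conn _]]]]]]]] f_onto f_sigma f_alpha x y.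
have [[dx <-] [dy <-]] := (f_onto x, f_onto y).
apply: (homo_connect _ (darts_conn dx dy)) => d _ /orP [] /eqP ->.
  exact: f_sigma.
exact: f_alpha.
Qed.

Lemma euler_clusters w : (kd w + #|V| = kp w + #|w| + 1)%N.
Proof.
have kd0 : (kd set0 <= 1)%N.
  apply/ncomp_le1/(connect_of_darts (f := face)) => [|d|d].
  - by case: hmap => _ [_ [_ [_ [_ [_ [_ [face_onto _]]]]]]].
  - by rewrite face_sigma; apply: connect1; apply/existsP; exists d; rewrite inE !eqxx.
  - by apply: connect1; apply/existsP; exists d; rewrite inE !eqxx.
have kpT : (kp setT <= 1)%N.
  apply/ncomp_le1/(connect_of_darts (f := vert)) => [|d|d].
  - by case: hmap => _ [_ [_ [_ [_ [vert_onto _]]]]].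
  - by rewrite vert_sigma connect0.
  - by apply: connect1; apply/existsP; exists d; rewrite inE !eqxx.
have kdT : kd setT = #|U| by apply: ncomp_rel0 => u v; apply/existsP => -[d]; rewrite inE.
have kp0 : kp set0 = #|V| by apply: ncomp_rel0 => x y; apply/existsP => -[d]; rewrite inE.
have card_map : (#|V| + #|U| = #|E| + 2)%N.
  by case: hmap => _ [_ [_ [_ [_ [_ [_ [_ [_ card_map]]]]]]]].
have := kdual_subset_le (sub0set w); have := kdual_subset_le (subsetT w).
rewrite cards0 cardsT; lia.
Qed.

End PlanarMap.

Local Open Scope ring_scope.

Section UniformSpins.
Variables (T Q : finType) (r : rel T).
Hypothesis r_sym : connect_sym r.
Variable R : numFieldType.

Definition comp_law (s : {ffun T -> Q}) : R :=
  if const_on_comp r s then (#|Q|%:R)^-1 ^+ ncomp r else 0.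

Lemma sum_comp_law : (0 < #|Q|)%N -> \sum_s comp_law s = 1.
Proof.
move=> Q_gt0; rewrite /comp_law -big_mkcond.
rewrite (eq_bigl [in [set s | const_on_comp r s]]) => [|s]; last by rewrite inE.
rewrite sumr_const (card_const_on_comp Q r_sym) -[LHS]mulr_natr natrX exprVn mulVf //.
by rewrite expf_neq0 // pnatr_eq0 -lt0n.
Qed.
End UniformSpins.

Lemma prodr_if_disjoint (T : finType) (R : comPzRingType) (A P : {set T}) (x : R) :
  \prod_(e in A) (if e \in P then 0 else x) = if [disjoint A & P] then x ^+ #|A| else 0.
Proof.
case: ifPn => [AP|]; last first.
  by rewrite -setI_eq0 => /set0Pn [e /setIP [eA eP]]; rewrite (bigD1 e) //= eP mul0r.
by rewrite -prodr_const; apply: eq_bigr => e eA; rewrite (disjointFr AP eA).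
Qed.

Lemma sum_subsets_disjoint (T : finType) (R : comPzRingType) (a b : R) (P D : {set T}) :
  a + b = 1 ->
  \sum_(w : {set T}) (if [disjoint w & P] then a ^+ #|w| else 0) *
                     (if [disjoint ~: w & D] then b ^+ #|~: w| else 0)
  = if [disjoint P & D] then a ^+ #|D| * b ^+ #|P| else 0.
Proof.
move=> ab1; pose g e := if e \in P then 0 else a; pose h e := if e \in D then 0 else b.
transitivity (\prod_e (g e + h e)).
  rewrite bigA_distr; apply: eq_big => // w _.
  rewrite -!prodr_if_disjoint [RHS](bigID [in w]) /=; congr (_ * _).
    by apply: eq_bigr => e ->.
  by apply: eq_big => [e|e]; rewrite inE // => /negbTE ->.
rewrite (eq_bigr (fun e => (if e \in D then g e else 1) * (if e \in P then b else 1))).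
  rewrite big_split /= -!big_mkcond prodr_if_disjoint prodr_const disjoint_sym.
  by case: ifP; rewrite ?mul0r.
move=> e _; rewrite /g /h.
by case: (e \in P); case: (e \in D); rewrite ?(mulr1, mul1r, mul0r, addr0, add0r, ab1).
Qed.

Lemma mixture_marginal (R : fieldType) (W A B : finType) (f : W -> R)
    (X : W -> A -> R) (Y : W -> B -> R) (g : A -> B -> R) (M : R) :
  M != 0 -> (forall w, \sum_t X w t = 1) -> (forall w, \sum_t Y w t = 1) ->
  (forall t t', \sum_w f w * X w t * Y w t' = M * g t t') ->
  forall t t', \sum_w f w / (\sum_v f v) * X w t * Y w t' = g t t' / \sum_u \sum_u' g u u'.
Proof.
move=> M_neq0 X1 Y1 fXY t t'.
have sum_f : \sum_w f w = M * \sum_u \sum_u' g u u'.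
  transitivity (\sum_w \sum_u \sum_u' f w * X w u * Y w u').
    apply: eq_bigr => w _; rewrite -{1}[f w]mulr1 -(X1 w) mulr_sumr.
    by apply: eq_bigr => u _; rewrite -{1}[f w * X w u]mulr1 -(Y1 w) mulr_sumr.
  rewrite exchange_big mulr_sumr; apply: eq_bigr => u _.
  by rewrite exchange_big mulr_sumr; apply: eq_bigr => u' _; exact: fXY.
under eq_bigr do rewrite [_ / _ * _]mulrAC [_ / _ * _]mulrAC.
by rewrite -mulr_suml fXY sum_f invfM mulrACA divff // mul1r.
Qed.

Section SpinConstraints.
Variables (D V E U Q Q' : finType) (alpha : {perm D})
  (vert : D -> V) (edge : D -> E) (face : D -> U).
Implicit Types (w : {set E}).

Lemma const_on_primE w (s : {ffun V -> Q}) :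
  const_on_prim alpha vert edge w s = [disjoint w & eta_prim alpha vert edge s].
Proof.
apply: etrans (const_on_dart_relE alpha edge vert (fun e => e \in w) s) _.
by apply: eq_disjoint_r => e; rewrite !inE.
Qed.

Lemma const_on_dualE w (s' : {ffun U -> Q'}) :
  const_on_dual alpha edge face w s' = [disjoint ~: w & eta_dual alpha edge face s'].
Proof.
apply: etrans (const_on_dart_relE alpha edge face (fun e => e \notin w) s') _.
have wC : (fun e => e \notin w) =i ~: w by move=> e; rewrite !inE.
by rewrite (eq_disjoint wC); apply: eq_disjoint_r => e; rewrite !inE.
Qed.
End SpinConstraints.

Lemma cluster_weight_regroup (F : fieldType) (c n a b l : F) (k m m' kd N : nat) :
  c != 0 -> n != 0 -> (kd + N = k + m + 1)%N ->
  (c * n) ^+ k * (n * a * l) ^+ m * (b * l) ^+ m' * c^-1 ^+ k * n^-1 ^+ kd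
  = n ^+ N / n * l ^+ (m + m') * (a ^+ m * b ^+ m').
Proof.
move=> c_neq0 n_neq0 euler.
have nN : n ^+ N = n ^+ k * n ^+ m * n / n ^+ kd.
  by rewrite -!exprD -exprSr -addn1 -euler exprD mulrAC divff ?mul1r // expf_neq0.
by rewrite nN exprD !exprMn !exprVn; field; rewrite n_neq0 !expf_neq0.
Qed.

Section FKCoupling.
Variables (D V E U : finType) (alpha sigma : {perm D})
  (vert : D -> V) (edge : D -> E) (face : D -> U).
Hypothesis hmap : genus0_map alpha sigma vert edge face.
Variables (Q Q' : finType) (R : realType) (a : R).
Hypotheses (Q_gt0 : (0 < #|Q|)%N) (Q'_gt0 : (0 < #|Q'|)%N) (a_gt0 : 0 < a) (a_lt1 : a < 1).

Let c : R := #|Q|%:R.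
Let n : R := #|Q'|%:R.
Let p := n / (n + a^-1 - 1).
Let lam := (n * a + (1 - a))^-1.
Let M := n ^+ #|V| / n * lam ^+ #|E|.

Let n_neq0 : n != 0. Proof. by rewrite pnatr_eq0 -lt0n. Qed.
Let a_neq0 : a != 0. Proof. exact: lt0r_neq0. Qed.
Let den_neq0 : n * a + (1 - a) != 0.
Proof. by rewrite lt0r_neq0 // addr_gt0 ?mulr_gt0 ?subr_gt0 ?ltr0n. Qed.
Let M_neq0 : M != 0.
Proof. by rewrite /M /lam !mulf_neq0 ?invr_neq0 ?expf_neq0 // invr_neq0. Qed.

Lemma fk_weight_cluster_spins w :
  fk_weight alpha vert edge (#|Q| * #|Q'|)%:R p w
    * c^-1 ^+ kprim alpha vert edge w * n^-1 ^+ kdual alpha edge face w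
  = M * (a ^+ #|w| * (1 - a) ^+ #|~: w|).
Proof.
have p_eq : p = n * a * lam by rewrite /p /lam; field; rewrite den_neq0 a_neq0.
have p1_eq : 1 - p = (1 - a) * lam by rewrite /p /lam; field; rewrite den_neq0 a_neq0.
have euler : (kdual alpha edge face w + #|V| = kprim alpha vert edge w + #|w| + 1)%N.
  exact: euler_clusters hmap w.
rewrite /fk_weight /M natrM p1_eq p_eq -(cardsC w).
by apply: cluster_weight_regroup; rewrite // pnatr_eq0 -lt0n.
Qed.

Lemma sum_fk_cluster_spins : exists2 M : R, M != 0 &
  forall (t : {ffun V -> Q}) (t' : {ffun U -> Q'}),
  \sum_(w : {set E}) fk_weight alpha vert edge (#|Q| * #|Q'|)%:R p w
      * comp_law (prim_rel alpha vert edge w) R t * comp_law (dual_rel alpha edge face w) R t'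
  = M * spin_weight alpha vert edge face a (1 - a) t t'.
Proof.
exists M => // t t'; rewrite /spin_weight /in_Sigma -(sum_subsets_disjoint _ _ (subrKC a 1)).
rewrite mulr_sumr; apply: eq_bigr => w _; rewrite /comp_law.
rewrite -[const_on_comp _ t]/(const_on_prim alpha vert edge w t) const_on_primE.
rewrite -[const_on_comp _ t']/(const_on_dual alpha edge face w t') const_on_dualE.
case: ifP => _; case: ifP => _; rewrite ?(mulr0, mul0r) //.
exact: fk_weight_cluster_spins.
Qed.
End FKCoupling.

Theorem corollary2p3
  (D V E U : finType) (alpha sigma : {perm D})
  (vert : D -> V) (edge : D -> E) (face : D -> U)
  (hmap : genus0_map alpha sigma vert edge face)
  (q q' : nat) (hq : (1 <= q)%N) (hq' : (1 <= q')%N)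
  (Q Q' : finType) (hQ : #|Q| = q) (hQ' : #|Q'| = q')
  (R : realType) (a : R) (ha0 : 0 < a) (ha1 : a < 1) :
  let b := 1 - a in
  let p := q'%:R / (q'%:R + a^-1 - 1) in
  forall (s : {ffun V -> Q}) (s' : {ffun U -> Q'}),
    coupled_law alpha vert edge face p s s' = spin_law alpha vert edge face a b s s'.
Proof.
move=> b p s s'; subst q q'.
have [M M_neq0 sum_terms] := sum_fk_cluster_spins hmap hq hq' ha0 ha1.
apply: (mixture_marginal M_neq0 _ _ sum_terms) => w; apply: sum_comp_law => //.
  exact: prim_connect_sym hmap w.
exact: dual_connect_sym hmap w.
Qed.
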